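(* Let $K\ge1$, $N>0$, $P_{\max}>0$, and for $k=1,\dots,K$ let $a_k:=(\rho_{g,k}\rho_{r,kL})^2>0$ and $\Gamma_k=\frac{M a_k}{\sigma^2}c_b^2$ with $c_b=\frac{2^b}{\pi}\sin\frac{\pi}{2^b}$. Consider the problem $$\max_{\{p_k\},\{\tilde N_k\}}\ \min_{k\in\{1,\dots,K\}}\ \log_2\!\left(1+p_k\Gamma_k\tilde N_k^2\right)\quad\text{s.t.}\quad \sum_{k=1}^K p_k=P_{\max},\ \sum_{k=1}^K\tilde N_k=N,\ p_k\ge0,\ \tilde N_k\ge0.$$ Its optimal solution is $$\tilde N_k^*=\frac{\left(2a_k^{-1}\right)^{1/3}N}{\sum_{j=1}^K\left(2a_j^{-1}\right)^{1/3}},\qquad p_k^*=\frac{P_{\max}\left(\rho_{g,k}\rho_{r,kL}\tilde N_k^*\right)^{-2}}{\sum_{j=1}^K\left(\rho_{g,j}\rho_{r,jL}\tilde N_j^*\right)^{-2}},\quad k=1,\dots,K.$$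
   Context: Interpretation: a base station with $M$ antennas serves $K$ user clusters, cluster $k$ aided by a local IRS with $\tilde N_k$ elements (relaxed to a continuous value) with $b$-bit phase quantization; $p_k$ is the power allocated to the representative user $u_L^k$ of cluster $k$, $(\rho_{g,k}\rho_{r,kL})^2$ its concatenated BS–IRS–user path loss, $\sigma^2$ the noise power; under pure LoS channels and interference-free transmission its rate is $\log_2(1+p_k\Gamma_k\tilde N_k^2)$. *)

From HB Require Import structures.
From mathcomp Require Import all_boot all_order all_algebra.
From mathcomp Require Import all_classical all_reals all_analysis.
Set Implicit Arguments. Unset Strict Implicit. Unset Printing Implicit Defensive.
Import Order.TTheory GRing.Theory Num.Theory.
Local Open Scope ring_scope.

Section Defs.
Variable R : realType.

Definition log2 (x : R) : R := ln x / ln 2.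

Definition c_b (b : nat) : R := 2 ^+ b / pi * sin (pi / 2 ^+ b).

Definition Gamma (M : nat) (sigma2 : R) (b : nat) (a : R) : R :=
  M%:R * a / sigma2 * c_b b ^+ 2.

Definition min_over (n : nat) (f : 'I_n.+1 -> R) : R :=
  \big[Num.min/f ord0]_(k < n.+1) f k.

Definition min_rate (n : nat) (Gam p Nt : 'I_n.+1 -> R) : R :=
  min_over (fun k => log2 (1 + p k * Gam k * Nt k ^+ 2)).

Definition feasible (n : nat) (Pmax Ntot : R) (p Nt : 'I_n.+1 -> R) : Prop :=
  [/\ \sum_(k < n.+1) p k = Pmax, \sum_(k < n.+1) Nt k = Ntot,
      forall k, 0 <= p k & forall k, 0 <= Nt k].
End Defs.

From HB Require Import structures.
From mathcomp Require Import all_boot all_order all_algebra.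
From mathcomp Require Import all_classical all_reals all_analysis.
From mathcomp Require Import ring lra.
Set Implicit Arguments.
Unset Strict Implicit.
Unset Printing Implicit Defensive.
Import Order.TTheory GRing.Theory Num.Theory.
Local Open Scope ring_scope.

(* Since the gain of cluster k is proportional to a_k p_k N_k^2, the max-min
   problem is solved by equalising these SNRs.  For fixed N, the best common
   SNR achievable with total power P is P / sum_k (a_k N_k^2)^-1, so N must
   minimise sum_k (a_k N_k^2)^-1 under sum_k N_k = N; by convexity of
   x |-> 1 / (a x^2) the minimiser is characterised by a_k N_k^3 being
   constant (Lagrange condition), i.e. N_k proportional to a_k^(-1/3).
   Conversely, for any feasible (p, N) some cluster has SNR at most
   sum_k p_k / sum_k (a_k N_k^2)^-1, which is at most the optimal value. *)

Section ProportionalShare.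
Variables (R : realFieldType) (I : finType).

Definition share (w : I -> R) (T : R) (k : I) : R := w k * T / \sum_j w j.

Lemma sumr_gt0 (i0 : I) (w : I -> R) :
  (forall k, 0 < w k) -> 0 < \sum_k w k.
Proof.
move=> w_gt0; rewrite (bigD1 i0) //= ltr_pwDl //.
by rewrite sumr_ge0 // => k _; apply: ltW.
Qed.

Lemma sum_share (w : I -> R) (T : R) :
  \sum_k w k != 0 -> \sum_k share w T k = T.
Proof. by move=> sw_neq0; rewrite -!mulr_suml mulrAC divff ?mul1r. Qed.

Lemma share_gt0 (i0 : I) (w : I -> R) (T : R) (k : I) :
  (forall k, 0 < w k) -> 0 < T -> 0 < share w T k.
Proof. by move=> w_gt0 T_gt0; rewrite divr_gt0 ?mulr_gt0 ?(sumr_gt0 i0). Qed.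

Lemma share_divr (w : I -> R) (T : R) (k : I) :
  w k != 0 -> share w T k / w k = T / \sum_j w j.
Proof. by move=> wk_neq0; rewrite /share mulrAC [w k * T]mulrC mulfK. Qed.

End ProportionalShare.

Section InverseSquareSum.
Variables (R : realFieldType) (I : finType).

(* Tangent-line inequality for the convex function x |-> 1 / (a x^2) at z. *)
Lemma inv_sqr_tangent (a y z : R) : 0 < a -> 0 < y -> 0 < z ->
  (a * z ^+ 2)^-1 - 2 * (y - z) / (a * z ^+ 3) <= (a * y ^+ 2)^-1.
Proof.
move=> a_gt0 y_gt0 z_gt0; rewrite -subr_ge0.
have -> : (a * y ^+ 2)^-1 - ((a * z ^+ 2)^-1 - 2 * (y - z) / (a * z ^+ 3))
   = (z - y) ^+ 2 * (z + 2 * y) / (a * y ^+ 2 * z ^+ 3).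
  by field; rewrite ?mulf_neq0 ?expf_neq0 ?gt_eqF.
apply: divr_ge0; first by rewrite mulr_ge0 ?sqr_ge0 //; lra.
by rewrite ltW // !mulr_gt0 ?exprn_gt0.
Qed.

(* The tangent terms sum to zero because a_k z_k^3 does not depend on k. *)
Lemma sum_inv_sqr_le (a y z : I -> R) (c : R) :
  (forall k, 0 < a k) -> (forall k, 0 < y k) -> (forall k, 0 < z k) ->
  (forall k, a k * z k ^+ 3 = c) -> \sum_k y k = \sum_k z k ->
  \sum_k (a k * z k ^+ 2)^-1 <= \sum_k (a k * y k ^+ 2)^-1.
Proof.
move=> a_gt0 y_gt0 z_gt0 az3 sum_yz.
have tangent_sum : \sum_k ((a k * z k ^+ 2)^-1 - 2 * (y k - z k) / c)
    <= \sum_k (a k * y k ^+ 2)^-1.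
  by apply: ler_sum => k _; rewrite -(az3 k) inv_sqr_tangent.
by rewrite sumrB -mulr_suml -mulr_sumr sumrB sum_yz subrr mulr0 mul0r subr0
  in tangent_sum.
Qed.

(* If every p_k u_k exceeded the bound, summing p_k > bound / u_k would give
   sum_k p_k > sum_k p_k. *)
Lemma exists_mul_le_div_sum_inv (i0 : I) (p u : I -> R) :
  (forall k, 0 < u k) -> exists k, p k * u k <= (\sum_k p k) / \sum_k (u k)^-1.
Proof.
move=> u_gt0; set S := \sum_k (u k)^-1.
have S_gt0 : 0 < S by rewrite /S (sumr_gt0 i0) // => k; rewrite invr_gt0.
case/boolP: [exists k, p k * u k <= (\sum_k p k) / S] => [/existsP //|].
move=> /existsPn all_gt; exfalso.
have lt_p k : (\sum_j p j) / S * (u k)^-1 < p k.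
  by rewrite ltr_pdivrMr // ltNge all_gt.
have I_nonempty : has predT (index_enum I) by apply/hasP; exists i0.
have := ltr_sum I_nonempty (fun k _ => lt_p k).
by rewrite -mulr_sumr divfK ?gt_eqF // ltxx.
Qed.

Lemma exists_snr_le (i0 : I) (a y z p : I -> R) (c : R) :
  (forall k, 0 < a k) -> (forall k, 0 <= y k) -> (forall k, 0 < z k) ->
  (forall k, 0 <= p k) ->
  (forall k, a k * z k ^+ 3 = c) -> \sum_k y k = \sum_k z k ->
  exists k, p k * (a k * y k ^+ 2) <= (\sum_k p k) / \sum_k (a k * z k ^+ 2)^-1.
Proof.
move=> a_gt0 y_ge0 z_gt0 p_ge0 az3 sum_yz.
have bound_ge0 : 0 <= (\sum_k p k) / \sum_k (a k * z k ^+ 2)^-1.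
  rewrite divr_ge0 ?sumr_ge0 // => k _.
  by rewrite invr_ge0 ltW ?mulr_gt0 ?exprn_gt0.
case: (boolP [exists k, y k == 0]) => [/existsP [k /eqP yk0] | no_zero].
  by exists k; rewrite yk0 expr0n !mulr0.
have y_gt0 k : 0 < y k.
  rewrite lt_neqAle y_ge0 andbT eq_sym.
  by apply: contra no_zero => yk0; apply/existsP; exists k.
have u_gt0 k : 0 < a k * y k ^+ 2 by rewrite mulr_gt0 ?exprn_gt0.
have [k le_k] := exists_mul_le_div_sum_inv i0 p u_gt0.
exists k; apply: (le_trans le_k); rewrite ler_wpM2l ?sumr_ge0 //.
have inv_sumr_gt0 (x : I -> R) : (forall k, 0 < x k) ->
    0 < \sum_k (a k * x k ^+ 2)^-1.
  move=> x_gt0; rewrite (sumr_gt0 i0) // => j.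
  by rewrite invr_gt0 mulr_gt0 ?exprn_gt0.
rewrite lef_pV2 ?posrE ?inv_sumr_gt0 //.
exact: (sum_inv_sqr_le a_gt0 y_gt0 z_gt0 az3).
Qed.

End InverseSquareSum.

Lemma powR_invnK (R : realType) (n : nat) (x : R) :
  (0 < n)%N -> 0 <= x -> (x `^ n%:R^-1) ^+ n = x.
Proof.
move=> n_gt0 x_ge0; rewrite -powR_mulrn ?powR_ge0 // -powRrM mulVf ?powRr1 //.
by rewrite pnatr_eq0 -lt0n.
Qed.

Lemma mul_share_root (R : realType) (I : finType) (n : nat) (a : I -> R)
    (c T : R) (k : I) :
  (0 < n)%N -> 0 < a k -> 0 <= c ->
  a k * share (fun j => (c / a j) `^ n%:R^-1) T k ^+ n
    = c * (T / \sum_j (c / a j) `^ n%:R^-1) ^+ n.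
Proof.
move=> n_gt0 ak_gt0 c_ge0.
rewrite /share -mulrA exprMn powR_invnK //; last by rewrite divr_ge0 // ltW.
by rewrite mulrA [a k * _]mulrC divfK ?gt_eqF.
Qed.

Lemma feasible_share (R : realType) (n : nat) (Pmax Ntot : R)
    (v w : 'I_n.+1 -> R) :
  (forall k, 0 < v k) -> (forall k, 0 < w k) -> 0 < Pmax -> 0 < Ntot ->
  feasible Pmax Ntot (share v Pmax) (share w Ntot).
Proof.
move=> v_gt0 w_gt0 Pmax_gt0 Ntot_gt0.
split=> [||k|k].
- by rewrite sum_share ?lt0r_neq0 ?(sumr_gt0 ord0).
- by rewrite sum_share ?lt0r_neq0 ?(sumr_gt0 ord0).
- by rewrite ltW ?(share_gt0 ord0).
- by rewrite ltW ?(share_gt0 ord0).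
Qed.

Lemma GammaE (R : realType) (M : nat) (sigma2 : R) (b : nat) (a : R) :
  Gamma M sigma2 b a = (M%:R / sigma2 * c_b R b ^+ 2) * a.
Proof. by rewrite /Gamma; ring. Qed.

Lemma ler_log2 (R : realType) (x y : R) : 0 < x -> x <= y -> log2 x <= log2 y.
Proof.
move=> x_gt0 le_xy; rewrite /log2 ler_wpM2r //.
  by rewrite invr_ge0 ltW // ln_gt0 // ltr1n.
by rewrite ler_ln // posrE (lt_le_trans x_gt0).
Qed.

Lemma min_rate_le (R : realType) (n : nat) (Gam p Nt : 'I_n.+1 -> R) k t :
  0 <= p k * Gam k * Nt k ^+ 2 -> p k * Gam k * Nt k ^+ 2 <= t ->
  min_rate Gam p Nt <= log2 (1 + t).
Proof.
move=> snr_ge0 snr_le; apply: le_trans (bigmin_le _ k _) _.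
by rewrite ler_log2 ?lerD2l // ltr_pwDl.
Qed.

Lemma min_rate_const (R : realType) (n : nat) (Gam p Nt : 'I_n.+1 -> R) t :
  (forall k, p k * Gam k * Nt k ^+ 2 = t) -> log2 (1 + t) <= min_rate Gam p Nt.
Proof. by move=> snr_eq; apply: le_bigmin => [|k _]; rewrite snr_eq. Qed.

(* K = n.+1 clusters *)
Theorem proposition4 (R : realType) (n M b : nat) (sigma2 Pmax Ntot : R)
    (rho_g rho_r : 'I_n.+1 -> R) :
  (0 < M)%N -> (0 < b)%N -> 0 < sigma2 -> 0 < Pmax -> 0 < Ntot ->
  (forall k, 0 < (rho_g k * rho_r k) ^+ 2) ->
  let a := fun k => (rho_g k * rho_r k) ^+ 2 in
  let Gam := fun k => Gamma M sigma2 b (a k) in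
  let Nstar := fun k =>
    (2 / a k) `^ (3^-1) * Ntot / \sum_(j < n.+1) (2 / a j) `^ (3^-1) in
  let pstar := fun k =>
    Pmax * (rho_g k * rho_r k * Nstar k) ^- 2
      / \sum_(j < n.+1) (rho_g j * rho_r j * Nstar j) ^- 2 in
  feasible Pmax Ntot pstar Nstar /\
  forall p Nt : 'I_n.+1 -> R, feasible Pmax Ntot p Nt ->
    min_rate Gam p Nt <= min_rate Gam pstar Nstar.
Proof.
move=> _ _ sigma2_gt0 Pmax_gt0 Ntot_gt0 rho2_gt0 a Gam Nstar pstar.
have a_gt0 k : 0 < a k := rho2_gt0 k.
pose w k := (2 / a k) `^ (3^-1 : R).
have w_gt0 k : 0 < w k by rewrite powR_gt0 ?divr_gt0.
have Nstar_gt0 k : 0 < Nstar k := share_gt0 ord0 k w_gt0 Ntot_gt0.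
have aNstar3 k : a k * Nstar k ^+ 3 = 2 * (Ntot / \sum_j w j) ^+ 3.
  exact: mul_share_root.
pose v k := (a k * Nstar k ^+ 2)^-1.
have v_gt0 k : 0 < v k.
  by rewrite /v invr_gt0; apply: mulr_gt0 => //; apply: exprn_gt0.
have pstarE : pstar = share v Pmax.
  apply/funext => k; rewrite /pstar /share /v; congr (_ / _).
    by rewrite mulrC exprMn.
  by apply: eq_bigr => j _; rewrite exprMn.
pose C := M%:R / sigma2 * c_b R b ^+ 2.
have C_ge0 : 0 <= C by rewrite mulr_ge0 ?sqr_ge0 // divr_ge0 // ltW.
have snrE k (q y : 'I_n.+1 -> R) :
    q k * Gam k * y k ^+ 2 = C * (q k * (a k * y k ^+ 2)).
  by rewrite /Gam GammaE -/C; ring.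
have snr_star k : pstar k * Gam k * Nstar k ^+ 2 = C * (Pmax / \sum_j v j).
  by rewrite snrE pstarE -[a k * _]invrK share_divr ?gt_eqF.
split; first by rewrite pstarE; apply: feasible_share.
move=> p Nt [sum_p sum_Nt p_ge0 Nt_ge0].
have [|k snr_k] := exists_snr_le ord0 a_gt0 Nt_ge0 Nstar_gt0 p_ge0 aNstar3.
  by rewrite sum_Nt; apply/esym/sum_share/lt0r_neq0/(sumr_gt0 ord0).
apply: le_trans (min_rate_const snr_star).
apply: (min_rate_le (k := k)); rewrite snrE.
  by rewrite mulr_ge0 // mulr_ge0 // mulr_ge0 ?sqr_ge0 // ltW.
by rewrite ler_wpM2l // -sum_p.
Qed.
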